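(* Let $A$ be a $\delta$-algebra, let $C_1,\dots,C_n$ be pairwise disjoint closed subsets of $\mathrm{Max}\,A$, and let $r_1,\dots,r_n\in[0,1]$. Then there exists $a\in A$ such that $\hat a(h)=r_i$ for every $i\in\{1,\dots,n\}$ and every $h\in C_i$.
   Context: An MV-algebra is an algebra $(A,\oplus,\neg,0)$ of type $(2,1,0)$ such that $(A,\oplus,0)$ is a commutative monoid, $\neg\neg a=a$, $a\oplus\neg 0=\neg 0$, and $\neg(\neg a\oplus b)\oplus b=\neg(\neg b\oplus a)\oplus a$. Derived operations: $1:=\neg 0$, $a\odot b:=\neg(\neg a\oplus\neg b)$, $a\ominus b:=a\odot\neg b$, $a\vee b:=\neg(\neg a\oplus b)\oplus b$ (join of a lattice order $\le$), $d(a,b):=(a\ominus b)\oplus(b\ominus a)$. Let $\mathcal{L}=\{\delta,\oplus,\neg,0\}$ of type $(\omega,2,1,0)$; $\tfrac12(x):=\delta(x,0,0,\dots)$. A $\delta$-algebra is an $\mathcal{L}$-algebra whose MV-reduct is an MV-algebra and satisfying for all $x,y,\vec x,\vec y$: (i) $d(\delta(\vec x),\delta(x_1,0,0,\dots))=\delta(0,x_2,x_3,\dots)$; (ii) $\tfrac12(\delta(\vec x))=\delta(\tfrac12(x_1),\tfrac12(x_2),\dots)$; (iii) $\delta(x,x,\dots)=x$; (iv) $\delta(0,\vec x)=\tfrac12(\delta(\vec x))$; (v) $\delta(\vec x)\le\delta(x_1\oplus y_1,x_2\oplus y_2,\dots)$; (vi) $\tfrac12(x\ominus y)=\tfrac12(x)\ominus\tfrac12(y)$.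 $[0,1]$ is the standard $\delta$-algebra with $x\oplus y=\min\{1,x+y\}$, $\neg x=1-x$, $\delta(\vec x)=\sum_i x_i/2^i$. For a $\delta$-algebra $A$, $\mathrm{Max}\,A$ is the set of MV-algebra homomorphisms $A\to[0,1]$ with the subspace topology of the product space $[0,1]^A$ (a compact Hausdorff space). For $a\in A$, $\hat a\colon\mathrm{Max}\,A\to[0,1]$ is the continuous map $\hat a(h):=h(a)$. *)

From Stdlib Require Import Reals List.
Open Scope R_scope.

(* Signature of L = {delta, oplus, neg, 0}; delta takes a sequence
   x : nat -> A, with x 0 playing the role of x_1. *)
Record deltaSig := DeltaSig {
  car :> Type;
  op : car -> car -> car;
  ng : car -> car;
  zr : car;
  dl : (nat -> car) -> car
}.

Section Derived.
Variable A : deltaSig.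
Definition one : A := ng A (zr A).
Definition odot (a b : A) : A := ng A (op A (ng A a) (ng A b)).
Definition ominus (a b : A) : A := odot a (ng A b).
Definition join (a b : A) : A := op A (ng A (op A (ng A a) b)) b.
Definition mle (a b : A) : Prop := join a b = b.
Definition dist (a b : A) : A := op A (ominus a b) (ominus b a).
Definition half (x : A) : A := dl A (fun k => match k with O => x | _ => zr A end).

Definition is_MV_algebra : Prop :=
  (forall a b c : A, op A a (op A b c) = op A (op A a b) c) /\
  (forall a b : A, op A a b = op A b a) /\
  (forall a : A, op A a (zr A) = a) /\
  (forall a : A, ng A (ng A a) = a) /\
  (forall a : A, op A a (ng A (zr A)) = ng A (zr A)) /\
  (forall a b : A, op A (ng A (op A (ng A a) b)) b = op A (ng A (op A (ng A b) a)) a).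

Definition is_delta_algebra : Prop :=
  is_MV_algebra /\
  (* (i) *)
  (forall x : nat -> A,
     dist (dl A x) (dl A (fun k => match k with O => x O | _ => zr A end))
     = dl A (fun k => match k with O => zr A | _ => x k end)) /\
  (* (ii) *)
  (forall x : nat -> A, half (dl A x) = dl A (fun k => half (x k))) /\
  (* (iii) *)
  (forall x : A, dl A (fun _ => x) = x) /\
  (* (iv) *)
  (forall x : nat -> A,
     dl A (fun k => match k with O => zr A | S j => x j end) = half (dl A x)) /\
  (* (v) *)
  (forall x y : nat -> A, mle (dl A x) (dl A (fun k => op A (x k) (y k)))) /\
  (* (vi) *)
  (forall x y : A, half (ominus x y) = ominus (half x) (half y)).

(* Max A: MV-algebra homomorphisms A -> [0,1] (standard MV-algebra). *)
Definition in_Max (h : A -> R) : Prop :=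
  (forall a, 0 <= h a <= 1) /\
  h (zr A) = 0 /\
  (forall a, h (ng A a) = 1 - h a) /\
  (forall a b, h (op A a b) = Rmin 1 (h a + h b)).

(* Closed subsets of Max A in the subspace topology of the product
   topology on [0,1]^A: C ⊆ Max A and every point of Max A outside C
   has a basic open neighbourhood (finitely many coordinates, radius
   eps) disjoint from C. *)
Definition closed_in_Max (C : (A -> R) -> Prop) : Prop :=
  (forall h, C h -> in_Max h) /\
  (forall h, in_Max h -> ~ C h ->
     exists (l : list A) (eps : R), 0 < eps /\
       forall h', in_Max h' ->
         (forall a, In a l -> Rabs (h' a - h a) < eps) -> ~ C h').
End Derived.

(* Every h ∈ Max A is viewed as a point of the cube [0,1]^A.
   1. Constants.  Axioms (i)-(vi) force h(δ(x)) = h(x_0)/2 + h(δ(x_1,x_2,...))/2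
      for every h ∈ Max A, so for a binary expansion r = Σ_k d_k/2^(k+1)
      (d_k ∈ {0,1}) the element δ(d_0,d_1,...) takes the value r on all of
      Max A.
   2. Urysohn lemma.  Disjoint closed C, D ⊆ Max A are separated by some a
      (â = 0 on C, â = 1 on D).  Near each g ∈ D, a "bump" built from
      constants, the distance d and a finite ⊕-multiple is 1 near g and 0 on
      C; near a point of the cube outside D the element 0 does the job, since
      D and Max A are closed.  The cube is compact (Tychonoff), so finitely
      many of these neighbourhoods cover it, and the join of the finitely
      many local separators separates C from D.
   3. Meets of separators give e_i with ê_i = 1 on C_i and 0 on the other
      C_j; the element ⊕_i (e_i ⊙ c_(r_i)) then takes the value r_i on C_i. *)

From Pilot Require Import Defs.
From Stdlib Require Import Reals.
From Stdlib Require Import List Lra Lia Classical FunctionalExtensionality IndefiniteDescription.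
Open Scope R_scope.
Set Warnings "-notation-overridden,-ambiguous-paths,-notation-incompatible-prefix,-redundant-canonical-projection".
From HB Require structures.
From mathcomp Require all_boot all_order all_algebra all_classical all_reals all_analysis Rstruct Rstruct_topology.

Definition unit_valued {A : Type} (f : A -> R) : Prop := forall a, 0 <= f a <= 1.
Definition close_on {A : Type} (l : list A) (e : R) (g h : A -> R) : Prop :=
  forall a, In a l -> Rabs (h a - g a) < e.

Module CubeCompactness.
Import HB.structures.
Import all_boot all_order all_algebra all_classical all_reals all_analysis Rstruct Rstruct_topology.
Import numFieldNormedType.Exports.
Import Order.TTheory GRing.Theory Num.Theory.
Local Open Scope classical_set_scope.

Lemma inInP (T : eqType) (x : T) (s : seq T) : reflect (List.In x s) (x \in s).
Proof.
elim: s => [|y s IH] /=; first by apply: ReflectF.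
rewrite in_cons; apply: (iffP orP).
- by case=> [/eqP ->|/IH]; [left|right].
- by case=> [->|/IH]; [left; apply/eqP|right].
Qed.

Definition cube (A : Type) := forall i : {classic A}, (fun _ => R) i.
HB.instance Definition _ (A : Type) :=
  Topological.copy (cube A) (prod_topology (fun _ : {classic A} => R)).
HB.instance Definition _ (A : Type) := isPointed.Build (cube A) (fun _ => 0%R).

Lemma cube_cover_compact (A : Type) :
  @cover_compact (cube A) [set f | forall i : {classic A}, `[0%R, 1%R] (f i)].
Proof.
rewrite -compact_cover.
exact: (@tychonoff {classic A} (fun _ => R) (fun _ => `[0%R, 1%R])
          (fun _ => @segment_compact R 0%R 1%R)).
Qed.

Lemma open_interval_around (c e : R) : open [set y : R | Rabs (y - c) < e].
Proof.
have -> : [set y : R | Rabs (y - c) < e] = ball c e.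
  apply/seteqP; split => y /=; rewrite /ball /= Rabs_minus_sym.
  - by move=> H; apply/RltP.
  - by move/RltP.
exact: (@ball_open R R^o c e).
Qed.

Lemma open_close_on (A : Type) (g : A -> R) (l : list A) (e : R) :
  @open (cube A) [set h : cube A | close_on l e g h].
Proof.
elim: l => [|a l IH].
  have -> : [set h : cube A | close_on nil e g h] = setT.
    by apply/seteqP; split => h //= _ a [].
  exact: openT.
have -> : [set h : cube A | close_on (a :: l) e g h]
  = ((fun h : cube A => h a) @^-1` [set y : R | Rabs (y - g a) < e]) `&`
    [set h : cube A | close_on l e g h].
  apply/seteqP; split => h /=.
  - by move=> H; split=> [|b Hb]; apply: H; [left|right].
  - by case=> H1 H2 b [<-|Hb]; [exact: H1|exact: H2].
apply: openI => //; apply: open_comp; last exact: open_interval_around.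
by move=> x _; exact: (@proj_continuous {classic A} (fun _ => R) a x).
Qed.

Lemma finite_subcover (A : Type) (l : (A -> R) -> list A) (e : (A -> R) -> R) :
  (forall f, 0 < e f) ->
  exists L : list (A -> R), (forall g, In g L -> unit_valued g) /\
    forall f, unit_valued f -> exists g, In g L /\ close_on (l g) (e g) g f.
Proof.
move=> e_pos.
pose U (g : {classic (A -> R)}) := [set h : cube A | close_on (l g) (e g) g h].
have [] := @cube_cover_compact A {classic (A -> R)}
  [set f | forall i : {classic A}, `[0%R, 1%R] (f i)] U.
- by move=> g _; exact: open_close_on.
- move=> h Dh; exists h => //= a _.
  rewrite Rminus_diag Rabs_R0; exact: e_pos.
move=> L sub cov; exists (finmap.enum_fset L); split.
- move=> g /inInP /sub; rewrite inE /= => Dg a.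
  by have := Dg a; rewrite /= in_itv /= => /andP [/RleP H1 /RleP H2].
- move=> f Hf.
  have [|g Lg Ug] := cov f.
    by move=> a /=; rewrite in_itv /=; apply/andP; split; apply/RleP; apply Hf.
  by exists g; split => //; apply/inInP.
Qed.
End CubeCompactness.

Ltac minmax := unfold Rmin, Rmax, Rabs in *;
  repeat match goal with
  | |- context [Rle_dec ?a ?b] => destruct (Rle_dec a b)
  | H : context [Rle_dec ?a ?b] |- _ => destruct (Rle_dec a b)
  | |- context [Rcase_abs ?a] => destruct (Rcase_abs a)
  | H : context [Rcase_abs ?a] |- _ => destruct (Rcase_abs a)
  end; lra.

Lemma halving_bounded_zero (e : nat -> R) :
  (forall k, e k = e (S k) / 2) -> (forall k, Rabs (e k) <= 1) -> e O = 0.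
Proof.
  intros Hstep Hbd.
  assert (Hpow : forall k, Rabs (e O) = Rabs (e k) * (/2) ^ k).
  { induction k as [|k IH]; [simpl; lra|].
    rewrite IH, (Hstep k); simpl pow; unfold Rdiv.
    rewrite Rabs_mult, (Rabs_right (/2)) by lra; field. }
  destruct (Req_dec (e O) 0) as [Z|NZ]; [exact Z|exfalso].
  assert (Hpos : 0 < Rabs (e O)) by (apply Rabs_pos_lt; exact NZ).
  destruct (pow_lt_1_zero (/2) ltac:(rewrite Rabs_right; lra) _ Hpos) as [N HN].
  specialize (HN N (le_n N)); rewrite Rabs_right in HN by (apply Rle_ge, pow_le; lra).
  pose proof (Hpow N); pose proof (Hbd N); pose proof (pow_le (/2) N ltac:(lra)); nra.
Qed.

Section DeltaAlgebra.
Variable A : deltaSig.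
Hypothesis HA : is_delta_algebra A.

Definition meet (a b : A) : A := ng A (join A (ng A a) (ng A b)).

Lemma ngng (a : A) : ng A (ng A a) = a.
Proof. destruct HA as [(_&_&_&H&_) _]; apply H. Qed.
Lemma op_comm (a b : A) : op A a b = op A b a.
Proof. destruct HA as [(_&H&_) _]; apply H. Qed.
Lemma op_zero_r (a : A) : op A a (zr A) = a.
Proof. destruct HA as [(_&_&H&_) _]; apply H. Qed.
Lemma op_zero_l (a : A) : op A (zr A) a = a.
Proof. rewrite op_comm; apply op_zero_r. Qed.

Section Homomorphism.
Variable h : A -> R.
Hypothesis Hh : in_Max A h.

Lemma hom_range a : 0 <= h a <= 1. Proof. apply Hh. Qed.
Lemma hom_zero : h (zr A) = 0. Proof. apply Hh. Qed.
Lemma hom_ng a : h (ng A a) = 1 - h a. Proof. apply Hh. Qed.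
Lemma hom_op a b : h (op A a b) = Rmin 1 (h a + h b). Proof. apply Hh. Qed.
Lemma hom_one : h (one A) = 1.
Proof. unfold one; rewrite hom_ng, hom_zero; lra. Qed.
Lemma hom_odot a b : h (odot A a b) = Rmax 0 (h a + h b - 1).
Proof.
  unfold odot; rewrite hom_ng, hom_op, !hom_ng.
  pose proof (hom_range a); pose proof (hom_range b); minmax.
Qed.
Lemma hom_ominus a b : h (ominus A a b) = Rmax 0 (h a - h b).
Proof. unfold ominus; rewrite hom_odot, hom_ng; f_equal; lra. Qed.
Lemma hom_join a b : h (join A a b) = Rmax (h a) (h b).
Proof.
  unfold join; rewrite hom_op, hom_ng, hom_op, hom_ng.
  pose proof (hom_range a); pose proof (hom_range b); minmax.
Qed.
Lemma hom_meet a b : h (meet a b) = Rmin (h a) (h b).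
Proof.
  unfold meet; rewrite hom_ng, hom_join, !hom_ng.
  pose proof (hom_range a); pose proof (hom_range b); minmax.
Qed.
Lemma hom_dist a b : h (Defs.dist A a b) = Rabs (h a - h b).
Proof.
  unfold Defs.dist; rewrite hom_op, !hom_ominus.
  pose proof (hom_range a); pose proof (hom_range b); minmax.
Qed.
Lemma hom_mle a b : mle A a b -> h a <= h b.
Proof.
  unfold mle; intro E; pose proof (hom_join a b) as E2.
  rewrite E in E2; rewrite E2; minmax.
Qed.

(* From (i), (iii), (iv): d(y, ½y) = ½y, so either ĥ(y) = 0 or ĥ(½y) = ĥ(y)/2. *)
Lemma hom_half_cases y : h y = 0 \/ h (half A y) = h y / 2.
Proof.
  destruct HA as (_&Hi&_&Hiii&Hiv&_).
  pose proof (Hi (fun _ => y)) as E; pose proof (Hiv (fun _ => y)) as E2.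
  cbv beta in E, E2; rewrite Hiii in E, E2; rewrite E2 in E.
  change (dl A (fun k => match k with O => y | S _ => zr A end)) with (half A y) in E.
  apply (f_equal h) in E; rewrite hom_dist in E.
  pose proof (hom_range (half A y)); minmax.
Qed.

(* Using (vi) with ½(1 ⊖ ¬x) = ½1 ⊖ ½¬x removes the degenerate case. *)
Lemma hom_half x : h (half A x) = h x / 2.
Proof.
  destruct HA as (_&_&_&_&_&_&Hvi).
  pose proof (Hvi (one A) (ng A x)) as E.
  assert (Hx : ominus A (one A) (ng A x) = x)
    by (unfold ominus, odot, one; rewrite !ngng, op_zero_l; apply ngng).
  rewrite Hx in E; apply (f_equal h) in E; rewrite hom_ominus in E.
  assert (H1 : h (half A (one A)) = 1/2)
    by (destruct (hom_half_cases (one A)); rewrite hom_one in *; lra).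
  rewrite H1 in E.
  destruct (Req_dec (h x) 0) as [Z|NZ].
  - assert (H2 : h (half A (ng A x)) = 1/2)
      by (destruct (hom_half_cases (ng A x)); rewrite hom_ng in *; lra).
    rewrite H2 in E; rewrite E, Z; minmax.
  - destruct (hom_half_cases x); lra.
Qed.

(* ĥ(δ(x_0,x_1,...)) = ĥ(x_0)/2 + ĥ(δ(x_1,x_2,...))/2: axiom (i) gives the
   distance between δ(x) and ½x_0, axiom (v) its sign. *)
Lemma hom_delta_step (x : nat -> A) :
  h (dl A x) = h (x O) / 2 + h (dl A (fun k => x (S k))) / 2.
Proof.
  destruct HA as (_&Hi&_&_&Hiv&Hv&_).
  pose proof (Hi x) as E.
  change (dl A (fun k => match k with O => x O | _ => zr A end)) with (half A (x O)) in E.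
  assert (Hshift : (fun k => match k with O => zr A | S _ => x k end)
                 = (fun k => match k with O => zr A | S j => x (S j) end))
    by (apply functional_extensionality; intros [|k]; reflexivity).
  rewrite Hshift, Hiv in E.
  apply (f_equal h) in E; rewrite hom_dist, !hom_half in E.
  pose proof (Hv (fun k => match k with O => x O | _ => zr A end)
                 (fun k => match k with O => zr A | _ => x k end)) as M.
  assert (Hsum : (fun k => op A (match k with O => x O | _ => zr A end)
                              (match k with O => zr A | _ => x k end)) = x)
    by (apply functional_extensionality; intros [|k];
        [apply op_zero_r|apply op_zero_l]).
  cbv beta in M; rewrite Hsum in M.
  change (dl A (fun k => match k with O => x O | _ => zr A end)) with (half A (x O)) in M.
  apply hom_mle in M; rewrite hom_half in M.
  pose proof (hom_range (dl A (fun k => x (S k)))); minmax.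
Qed.
End Homomorphism.

Section BinaryExpansion.
Variable r : R.

Fixpoint bin_rem (k : nat) : R :=
  match k with
  | O => r
  | S k => if Rle_dec (1/2) (bin_rem k) then 2 * bin_rem k - 1 else 2 * bin_rem k
  end.
Definition bin_digit (k : nat) : A := if Rle_dec (1/2) (bin_rem k) then one A else zr A.
Definition bin_tail (k : nat) : A := dl A (fun j => bin_digit (k + j)).

Lemma bin_rem_range : 0 <= r <= 1 -> forall k, 0 <= bin_rem k <= 1.
Proof.
  intros Hr k; induction k; simpl; [lra|].
  destruct (Rle_dec (1/2) (bin_rem k)); lra.
Qed.

Lemma hom_bin_tail_step h k : in_Max A h ->
  h (bin_tail k) - bin_rem k = (h (bin_tail (S k)) - bin_rem (S k)) / 2.
Proof.
  intro Hh; unfold bin_tail at 1; rewrite (hom_delta_step h Hh).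
  replace (fun j => bin_digit (k + S j)) with (fun j => bin_digit (S k + j))
    by (apply functional_extensionality; intro j; f_equal; lia).
  fold (bin_tail (S k)); rewrite Nat.add_0_r; unfold bin_digit; simpl bin_rem.
  destruct (Rle_dec (1/2) (bin_rem k));
    [rewrite (hom_one h Hh)|rewrite (hom_zero h Hh)]; lra.
Qed.
End BinaryExpansion.

Definition const_elt (r : R) : A := bin_tail r O.

Lemma hom_const r h : 0 <= r <= 1 -> in_Max A h -> h (const_elt r) = r.
Proof.
  intros Hr Hh.
  enough (E : h (bin_tail r O) - bin_rem r O = 0) by (unfold const_elt; simpl in E; lra).
  apply (halving_bounded_zero (fun k => h (bin_tail r k) - bin_rem r k)).
  - intro k; apply hom_bin_tail_step; exact Hh.
  - intro k; pose proof (hom_range h Hh (bin_tail r k));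
      pose proof (bin_rem_range r Hr k); minmax.
Qed.

Fixpoint bump (g : A -> R) (l : list A) (eps : R) : A :=
  match l with
  | nil => one A
  | a :: l => meet (ominus A (const_elt eps) (Defs.dist A a (const_elt (g a)))) (bump g l eps)
  end.

Lemma hom_bump_near h g l eps : in_Max A h -> in_Max A g -> 0 < eps <= 1 ->
  close_on l (eps / 2) g h -> eps / 2 <= h (bump g l eps).
Proof.
  intros Hh Hg He; induction l as [|b l IH]; intro Hl; simpl.
  - rewrite (hom_one h Hh); lra.
  - rewrite (hom_meet h Hh), (hom_ominus h Hh), (hom_dist h Hh),
      (hom_const eps h ltac:(lra) Hh), (hom_const (g b) h (hom_range g Hg b) Hh).
    pose proof (IH (fun a H => Hl a (or_intror H))).
    pose proof (Hl b (or_introl eq_refl)); minmax.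
Qed.

Lemma hom_bump_far h g l eps a : in_Max A h -> in_Max A g -> 0 < eps <= 1 ->
  In a l -> eps <= Rabs (h a - g a) -> h (bump g l eps) = 0.
Proof.
  intros Hh Hg He; induction l as [|b l IH]; intros Hin Ha; simpl; [destruct Hin|].
  rewrite (hom_meet h Hh), (hom_ominus h Hh), (hom_dist h Hh),
    (hom_const eps h ltac:(lra) Hh), (hom_const (g b) h (hom_range g Hg b) Hh).
  pose proof (hom_range h Hh (bump g l eps)).
  destruct Hin as [<-|Hin]; [|rewrite (IH Hin Ha)]; minmax.
Qed.

Fixpoint mv_mult (k : nat) (b : A) : A :=
  match k with O => zr A | S k => op A b (mv_mult k b) end.

Lemma hom_mv_mult h k b : in_Max A h -> h (mv_mult k b) = Rmin 1 (INR k * h b).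
Proof.
  intro Hh; induction k as [|k IH]; simpl mv_mult.
  - rewrite (hom_zero h Hh); simpl INR; rewrite Rmult_0_l; minmax.
  - rewrite (hom_op h Hh), IH, S_INR, Rmult_plus_distr_r, Rmult_1_l.
    pose proof (hom_range h Hh b); pose proof (pos_INR k).
    assert (0 <= INR k * h b) by (apply Rmult_le_pos; lra); minmax.
Qed.

Section Separation.
Variables C D : (A -> R) -> Prop.
Hypothesis HC : closed_in_Max A C.
Hypothesis HD : closed_in_Max A D.
Hypothesis Hdisj : forall h, C h -> D h -> False.

Definition separates_near (l : list A) (eps : R) (g : A -> R) (b : A) : Prop :=
  (forall h, C h -> h b = 0) /\ (forall h, D h -> close_on l eps g h -> h b = 1).

(* Around g ∈ D: a large multiple of the bump at g, for a neighbourhood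
   of g avoiding C. *)
Lemma separation_near_D g : D g ->
  exists l eps b, 0 < eps /\ separates_near l eps g b.
Proof.
  intro Dg; pose proof (proj1 HD g Dg) as Hg.
  destruct (proj2 HC g Hg (fun Cg => Hdisj g Cg Dg)) as (l & eps0 & Heps0 & Hfar).
  set (eps := Rmin eps0 1).
  assert (He : 0 < eps <= 1) by (unfold eps; minmax).
  destruct (INR_unbounded (2 / eps)) as [k Hk].
  assert (Hk2 : INR k * eps > 2).
  { assert (2 / eps * eps = 2) by (field; lra).
    assert (2 / eps * eps < INR k * eps) by (apply Rmult_lt_compat_r; lra); lra. }
  exists l, (eps / 2), (mv_mult k (bump g l eps)); split; [lra|split].
  - intros h Ch; pose proof (proj1 HC h Ch) as Hh.
    assert (Hex : exists a, In a l /\ eps <= Rabs (h a - g a)).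
    { apply NNPP; intro Hn; apply (Hfar h Hh); [|exact Ch].
      intros a Ha; apply Rnot_le_lt; intro Hle; apply Hn.
      exists a; split; [exact Ha|unfold eps; minmax]. }
    destruct Hex as (a & Ha & Hle).
    rewrite (hom_mv_mult h k _ Hh), (hom_bump_far h g l eps a Hh Hg He Ha Hle),
      Rmult_0_r; minmax.
  - intros h Dh Hl; pose proof (proj1 HD h Dh) as Hh.
    pose proof (hom_bump_near h g l eps Hh Hg He Hl).
    rewrite (hom_mv_mult h k _ Hh); pose proof (pos_INR k).
    assert (INR k * h (bump g l eps) >= 1) by nra; minmax.
Qed.

(* Max A is closed in the cube: a point of the cube that is not a
   homomorphism violates one of the defining identities at finitely many
   coordinates, and so does every point close to it there. *)
Lemma nbhd_outside_Max f : unit_valued f -> ~ in_Max A f ->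
  exists l eps, 0 < eps /\ forall h, in_Max A h -> ~ close_on l eps f h.
Proof.
  intros Hf Hn.
  destruct (classic (f (zr A) = 0)) as [Z|Z].
  2:{ exists (zr A :: nil), (Rabs (f (zr A))); split; [apply Rabs_pos_lt; exact Z|].
      intros h Hh Hl; specialize (Hl (zr A) (or_introl eq_refl)).
      rewrite (hom_zero h Hh) in Hl; minmax. }
  destruct (classic (forall a, f (ng A a) = 1 - f a)) as [Ng|Ng].
  2:{ apply not_all_ex_not in Ng; destruct Ng as [a Ha].
      exists (a :: ng A a :: nil), (Rabs (f (ng A a) - (1 - f a)) / 2); split.
      { assert (0 < Rabs (f (ng A a) - (1 - f a))) by (apply Rabs_pos_lt; lra); lra. }
      intros h Hh Hl; pose proof (Hl a ltac:(simpl; auto)).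
      pose proof (Hl (ng A a) ltac:(simpl; auto)) as H2.
      rewrite (hom_ng h Hh) in H2; minmax. }
  destruct (classic (forall a b, f (op A a b) = Rmin 1 (f a + f b))) as [Op|Op].
  2:{ apply not_all_ex_not in Op; destruct Op as [a Ha].
      apply not_all_ex_not in Ha; destruct Ha as [b Hb].
      exists (a :: b :: op A a b :: nil), (Rabs (f (op A a b) - Rmin 1 (f a + f b)) / 3).
      split.
      { assert (0 < Rabs (f (op A a b) - Rmin 1 (f a + f b))) by (apply Rabs_pos_lt; lra); lra. }
      intros h Hh Hl; pose proof (Hl a ltac:(simpl; auto)).
      pose proof (Hl b ltac:(simpl; auto)).
      pose proof (Hl (op A a b) ltac:(simpl; auto)) as H3.
      rewrite (hom_op h Hh) in H3; minmax. }
  exfalso; apply Hn; repeat split; auto; apply Hf.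
Qed.

Lemma nbhd_outside_D f : unit_valued f -> ~ D f ->
  exists l eps, 0 < eps /\ forall h, D h -> ~ close_on l eps f h.
Proof.
  intros Hf Df; destruct (classic (in_Max A f)) as [Mf|Mf].
  - destruct (proj2 HD f Mf Df) as (l & eps & He & Hfar).
    exists l, eps; split; [exact He|].
    intros h Dh Hl; exact (Hfar h (proj1 HD h Dh) Hl Dh).
  - destruct (nbhd_outside_Max f Hf Mf) as (l & eps & He & Hfar).
    exists l, eps; split; [exact He|].
    intros h Dh; exact (Hfar h (proj1 HD h Dh)).
Qed.

Lemma separation_near f : unit_valued f ->
  exists l eps, 0 < eps /\ exists b, separates_near l eps f b.
Proof.
  intro Hf; destruct (classic (D f)) as [Df|Df].
  - destruct (separation_near_D f Df) as (l & eps & b & He & Hb).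
    exists l, eps; split; [exact He|exists b; exact Hb].
  - destruct (nbhd_outside_D f Hf Df) as (l & eps & He & Hfar).
    exists l, eps; split; [exact He|exists (zr A); split].
    + intros h Ch; exact (hom_zero h (proj1 HC h Ch)).
    + intros h Dh Hl; destruct (Hfar h Dh Hl).
Qed.

Lemma join_separators (l : (A -> R) -> list A) (eps : (A -> R) -> R) (L : list (A -> R)) :
  (forall g, In g L -> exists b, separates_near (l g) (eps g) g b) ->
  exists a, (forall h, C h -> h a = 0) /\
    forall h, D h -> (exists g, In g L /\ close_on (l g) (eps g) g h) -> h a = 1.
Proof.
  induction L as [|g L IH]; intro Hsep.
  - exists (zr A); split; [intros h Ch; exact (hom_zero h (proj1 HC h Ch))|].
    intros h _ (g & [] & _).
  - destruct IH as (a & Ha0 & Ha1); [intros g' Hg'; apply Hsep; right; exact Hg'|].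
    destruct (Hsep g (or_introl eq_refl)) as (b & Hb0 & Hb1).
    exists (join A b a); split.
    + intros h Ch; pose proof (proj1 HC h Ch) as Hh.
      rewrite (hom_join h Hh), Ha0, Hb0 by exact Ch; minmax.
    + intros h Dh (g' & Hin & Hcl); pose proof (proj1 HD h Dh) as Hh.
      rewrite (hom_join h Hh).
      pose proof (hom_range h Hh a); pose proof (hom_range h Hh b).
      destruct Hin as [<-|Hin].
      * rewrite (Hb1 h Dh Hcl); minmax.
      * rewrite (Ha1 h Dh (ex_intro _ g' (conj Hin Hcl))); minmax.
Qed.

Lemma urysohn : exists a, (forall h, C h -> h a = 0) /\ (forall h, D h -> h a = 1).
Proof.
  destruct (functional_choice (fun (f : A -> R) (p : list A * R) => 0 < snd p /\
     (unit_valued f -> exists b, separates_near (fst p) (snd p) f b))) as [P HP].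
  { intro f; destruct (classic (unit_valued f)) as [Hf|Hf].
    - destruct (separation_near f Hf) as (l & eps & He & Hb).
      exists (l, eps); split; [exact He|intros _; exact Hb].
    - exists (nil, 1); split; [simpl; lra|intro; contradiction]. }
  destruct (CubeCompactness.finite_subcover A (fun f => fst (P f)) (fun f => snd (P f))
              (fun f => proj1 (HP f))) as (L & HL & Hcover).
  destruct (join_separators (fun f => fst (P f)) (fun f => snd (P f)) L)
    as (a & Ha0 & Ha1).
  { intros g Hg; exact (proj2 (HP g) (HL g Hg)). }
  exists a; split; [exact Ha0|].
  intros h Dh; apply (Ha1 h Dh), Hcover; exact (hom_range h (proj1 HD h Dh)).
Qed.
End Separation.

Lemma separate_from_finitely_many (C : (A -> R) -> Prop) (D : nat -> (A -> R) -> Prop)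
  (P : nat -> Prop) (n : nat) :
  closed_in_Max A C ->
  (forall j, (j < n)%nat -> P j -> closed_in_Max A (D j)) ->
  (forall j h, (j < n)%nat -> P j -> C h -> D j h -> False) ->
  exists a, (forall h, C h -> h a = 1) /\
    (forall j h, (j < n)%nat -> P j -> D j h -> h a = 0).
Proof.
  intros HC; induction n as [|n IH]; intros HD Hdisj.
  - exists (one A); split; [intros h Ch; exact (hom_one h (proj1 HC h Ch))|lia].
  - destruct IH as (a & Ha1 & Ha0).
    { intros j Hj; apply HD; lia. }
    { intros j h Hj; apply Hdisj; lia. }
    destruct (classic (P n)) as [Pn|Pn].
    + destruct (urysohn (D n) C (HD n ltac:(lia) Pn) HC
                  (fun h Dh Ch => Hdisj n h ltac:(lia) Pn Ch Dh)) as (u & Hu0 & Hu1).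
      exists (meet a u); split.
      * intros h Ch; pose proof (proj1 HC h Ch) as Hh.
        rewrite (hom_meet h Hh), Ha1, Hu1 by exact Ch; minmax.
      * intros j h Hj Pj Dh; pose proof (proj1 (HD j Hj Pj) h Dh) as Hh.
        rewrite (hom_meet h Hh).
        pose proof (hom_range h Hh a); pose proof (hom_range h Hh u).
        destruct (Nat.eq_dec j n) as [->|Hjn].
        -- rewrite (Hu0 h Dh); minmax.
        -- rewrite (Ha0 j h ltac:(lia) Pj Dh); minmax.
    + exists a; split; [exact Ha1|].
      intros j h Hj Pj; destruct (Nat.eq_dec j n) as [->|Hjn]; [contradiction|].
      apply Ha0; [lia|exact Pj].
Qed.

Fixpoint mv_sum (n : nat) (x : nat -> A) : A :=
  match n with O => zr A | S m => op A (x m) (mv_sum m x) end.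

Lemma hom_mv_sum_single h (x : nat -> A) (n i : nat) : in_Max A h ->
  (forall j, (j < n)%nat -> j <> i -> h (x j) = 0) ->
  h (mv_sum n x) = if Compare_dec.lt_dec i n then h (x i) else 0.
Proof.
  intros Hh H0; induction n as [|n IH]; simpl mv_sum.
  - exact (hom_zero h Hh).
  - rewrite (hom_op h Hh), IH by (intros j Hj; apply H0; lia).
    pose proof (hom_range h Hh (x i)).
    destruct (Nat.eq_dec n i) as [->|Hni].
    + destruct (Compare_dec.lt_dec i i); [lia|].
      destruct (Compare_dec.lt_dec i (S i)); [minmax|lia].
    + rewrite (H0 n ltac:(lia) Hni).
      destruct (Compare_dec.lt_dec i n); destruct (Compare_dec.lt_dec i (S n)); try lia; minmax.
Qed.
End DeltaAlgebra.

Theorem mainTheorem5 (A : deltaSig) (HA : is_delta_algebra A)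
  (n : nat) (C : nat -> (A -> R) -> Prop) (r : nat -> R)
  (HC : forall i, (i < n)%nat -> closed_in_Max A (C i))
  (Hdisj : forall i j h, (i < n)%nat -> (j < n)%nat -> i <> j ->
             C i h -> C j h -> False)
  (Hr : forall i, (i < n)%nat -> 0 <= r i <= 1) :
  exists a : A, forall i, (i < n)%nat -> forall h, C i h -> h a = r i.
Proof.
  destruct (functional_choice (fun (i : nat) (a : A) => (i < n)%nat ->
     (forall h, C i h -> h a = 1) /\
     (forall j h, (j < n)%nat -> j <> i -> C j h -> h a = 0))) as [e He].
  { intro i; destruct (classic (i < n)%nat) as [Hi|Hi]; [|exists (zr A); tauto].
    destruct (separate_from_finitely_many A HA (C i) C (fun j => j <> i) n (HC i Hi)
                (fun j Hj _ => HC j Hj)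
                (fun j h Hj Hji Ci Cj => Hdisj i j h Hi Hj (not_eq_sym Hji) Ci Cj))
      as (a & Ha1 & Ha0).
    exists a; intros _; split; [exact Ha1|exact Ha0]. }
  exists (mv_sum A n (fun j => odot A (e j) (const_elt A (r j)))).
  intros i Hi h Ch; pose proof (proj1 (HC i Hi) h Ch) as Hh.
  rewrite (hom_mv_sum_single A h _ n i Hh).
  - destruct (Compare_dec.lt_dec i n) as [_|]; [|lia].
    rewrite (hom_odot A h Hh), (hom_const A HA (r i) h (Hr i Hi) Hh), (proj1 (He i Hi) h Ch).
    pose proof (Hr i Hi); minmax.
  - intros j Hj Hji.
    rewrite (hom_odot A h Hh), (hom_const A HA (r j) h (Hr j Hj) Hh),
      (proj2 (He j Hj) i h Hi (not_eq_sym Hji) Ch).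
    pose proof (Hr j Hj); minmax.
Qed.
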